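(* The SRT$_{\mathsf{A}}$-definable transformations are closed under union, intersection, and composition. That is: for any linear group $\mathbf{G}$ and finite label sets $\Sigma,\Gamma,\Theta$, (i) if $\mathcal{S}_1,\mathcal{S}_2$ are $(\Sigma,\Gamma,\mathbf{G})$-SRT$_{\mathsf{A}}$, then $[\![\mathcal{S}_1]\!]\cup[\![\mathcal{S}_2]\!]$ and $[\![\mathcal{S}_1]\!]\cap[\![\mathcal{S}_2]\!]$ are each equal to $[\![\mathcal{S}]\!]$ for some $(\Sigma,\Gamma,\mathbf{G})$-SRT$_{\mathsf{A}}$ $\mathcal{S}$; (ii) if $\mathcal{S}_1$ is a $(\Sigma,\Gamma,\mathbf{G})$-SRT$_{\mathsf{A}}$ and $\mathcal{S}_2$ a $(\Gamma,\Theta,\mathbf{G})$-SRT$_{\mathsf{A}}$, then $[\![\mathcal{S}_1]\!]\cdot[\![\mathcal{S}_2]\!]=[\![\mathcal{S}]\!]$ for some $(\Sigma,\Theta,\mathbf{G})$-SRT$_{\mathsf{A}}$ $\mathcal{S}$.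
   Context: A linear group is a triple $\mathbf{G}=(D,\leq,+)$ where $D$ is an infinite set, $\leq$ is a total order on $D$, and $(D,+)$ is a group with identity $0$. For finite label sets $\Sigma$ (input) and $\Gamma$ (output), a $(\Sigma,\Gamma,\mathbf{G})$-streaming register transducer (SRT) is a tuple $\mathcal{S}=(Q,q_0,k,R_0,\Delta)$ where $Q$ is a finite set of states, $q_0\in Q$, $k\in\mathbb{N}$ is the number of registers, $R_0\in D^k$ gives the initial register values, and $\Delta\subseteq Q\times\Sigma\times\{>,=,<\}^k\times\{\mathsf{old},\mathsf{new},\mathsf{add}\}^k\times\{1,\dots,k\}\times\Gamma\times Q$ is a finite set of transitions. A transition $(q,\sigma,l,m,u,\gamma,q')$ enables the step $(q,R)\xrightarrow[(\gamma,d')]{(\sigma,d)}(q',R')$ between configurations ($q\in Q$, $R\in D^k$) iff (1) for every $i$, $d>R[i]$, $d=R[i]$ or $d<R[i]$ according as $l[i]$ is $>$, $=$ or $<$; (2) for every $i$, $R'[i]=R[i]$ if $m[i]=\mathsf{old}$, $R'[i]=d$ if $m[i]=\mathsf{new}$, $R'[i]=R[i]+d$ if $m[i]=\mathsf{add}$; (3) $d'=R'[u]$. A run over a finite data word $s\in(\Sigma\times D)^*$ of length $n$ generating $t\in(\Gamma\times D)^*$ is a sequence of $n$ steps from $(q_0,R_0)$, the $i$-th reading $s[i]$ and emitting $t[i]$, each enabled by a transition of $\Delta$. $s\otimes t$ is the word with $i$-th letter $(s[i],t[i])$, and $[\![\mathcal{S}]\!]=\{s\otimes t:\text{there is a run over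 }s\text{ generating }t\}$. An SRT is add-free (an SRT$_{\mathsf{A}}$) if every transition has update vector in $\{\mathsf{old},\mathsf{new}\}^k$. Composition: for $\mathcal{T}_1$ over $(\Sigma\times D)\times(\Gamma\times D)$ and $\mathcal{T}_2$ over $(\Gamma\times D)\times(\Theta\times D)$, $\mathcal{T}_1\cdot\mathcal{T}_2$ is the set of $s_1\otimes s_2$ ($s_1\in(\Sigma\times D)^*$, $s_2\in(\Theta\times D)^*$) such that some $s_3\in(\Gamma\times D)^*$ has $s_1\otimes s_3\in\mathcal{T}_1$ and $s_3\otimes s_2\in\mathcal{T}_2$. *)

From Stdlib Require List.
From mathcomp Require Import all_boot.
Set Implicit Arguments.
Unset Strict Implicit.
Unset Printing Implicit Defensive.

Record linear_group := LinearGroup {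
  lg_D :> Type;
  lg_le : lg_D -> lg_D -> Prop;
  lg_add : lg_D -> lg_D -> lg_D;
  lg_zero : lg_D;
  lg_opp : lg_D -> lg_D;
  lg_infinite : forall l : list lg_D, exists x, ~ List.In x l;
  lg_le_refl : forall x, lg_le x x;
  lg_le_antisym : forall x y, lg_le x y -> lg_le y x -> x = y;
  lg_le_trans : forall x y z, lg_le x y -> lg_le y z -> lg_le x z;
  lg_le_total : forall x y, lg_le x y \/ lg_le y x;
  lg_addA : forall x y z, lg_add x (lg_add y z) = lg_add (lg_add x y) z;
  lg_add0l : forall x, lg_add lg_zero x = x;
  lg_add0r : forall x, lg_add x lg_zero = x;
  lg_addNl : forall x, lg_add (lg_opp x) x = lg_zero;
  lg_addNr : forall x, lg_add x (lg_opp x) = lg_zero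
}.

Definition lg_lt (G : linear_group) (x y : G) : Prop := lg_le x y /\ x <> y.

Inductive cmp := CGt | CEq | CLt.
Inductive upd := UOld | UNew | UAdd.

Definition cmp_sem (G : linear_group) (c : cmp) (d r : G) : Prop :=
  match c with
  | CGt => lg_lt r d
  | CEq => d = r
  | CLt => lg_lt d r
  end.

Definition upd_sem (G : linear_group) (m : upd) (r d : G) : G :=
  match m with
  | UOld => r
  | UNew => d
  | UAdd => lg_add r d
  end.

Record transition (Sigma Gamma Q : Type) (k : nat) := Transition {
  tr_src : Q;
  tr_in : Sigma;
  tr_test : 'I_k -> cmp;
  tr_upd : 'I_k -> upd;
  tr_out : 'I_k;
  tr_lab : Gamma;
  tr_dst : Q
}.

(* A (Sigma, Gamma, G)-streaming register transducer. Delta is a finite set,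
   given as a list. *)
Record srt (Sigma Gamma : finType) (G : linear_group) := SRT {
  srt_Q : finType;
  srt_q0 : srt_Q;
  srt_k : nat;
  srt_R0 : 'I_srt_k -> lg_D G;
  srt_Delta : list (transition Sigma Gamma srt_Q srt_k)
}.

Definition enables (Sigma Gamma : finType) (G : linear_group) (Q : Type) (k : nat)
    (tr : transition Sigma Gamma Q k) (q : Q) (R : 'I_k -> lg_D G)
    (sigma : Sigma) (d : lg_D G) (gamma : Gamma) (d' : lg_D G)
    (q' : Q) (R' : 'I_k -> lg_D G) : Prop :=
  [/\ tr_src tr = q, tr_in tr = sigma, tr_lab tr = gamma, tr_dst tr = q'
    & [/\ forall i, cmp_sem (tr_test tr i) d (R i),
          forall i, R' i = upd_sem (tr_upd tr i) (R i) d
        & d' = R' (tr_out tr)]].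

(* Words of (Sigma x D) x (Gamma x D): the i-th letter is (s[i], t[i]),
   i.e. this represents s (x) t. *)
Definition transformation (Sigma Gamma : Type) (G : linear_group) :=
  seq ((Sigma * lg_D G) * (Gamma * lg_D G)) -> Prop.

Fixpoint runs_from (Sigma Gamma : finType) (G : linear_group) (S : srt Sigma Gamma G)
    (q : srt_Q S) (R : 'I_(srt_k S) -> lg_D G)
    (w : seq ((Sigma * lg_D G) * (Gamma * lg_D G))) : Prop :=
  match w with
  | [::] => True
  | ((sigma, d), (gamma, d')) :: w' =>
      exists tr, List.In tr (srt_Delta S) /\
        exists q' R', enables tr q R sigma d gamma d' q' R' /\ @runs_from Sigma Gamma G S q' R' w'
  end.

Definition semantics (Sigma Gamma : finType) (G : linear_group) (S : srt Sigma Gamma G)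
  : transformation Sigma Gamma G :=
  fun w => @runs_from Sigma Gamma G S (srt_q0 S) (@srt_R0 _ _ _ S) w.

Definition add_free (Sigma Gamma : finType) (G : linear_group) (S : srt Sigma Gamma G) : Prop :=
  forall tr, List.In tr (srt_Delta S) -> forall i, tr_upd tr i <> UAdd.

Definition compose (Sigma Gamma Theta : Type) (G : linear_group)
    (T1 : transformation Sigma Gamma G) (T2 : transformation Gamma Theta G)
  : transformation Sigma Theta G :=
  fun w => exists (s1 : seq (Sigma * lg_D G)) (s2 : seq (Theta * lg_D G))
                  (s3 : seq (Gamma * lg_D G)),
    [/\ size s1 = size s3, size s3 = size s2, w = zip s1 s2,
        T1 (zip s1 s3) & T2 (zip s3 s2)].

(* The transducers are simulated by one whose registers form a pool of
   N + 1 slots, N being the number of simulated registers. The state records,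
   for each simulated register, the slot that holds its value: this pointer
   indirection lets a register of one transducer take over a value held by
   another, which add-free updates cannot copy. Each step writes the input
   datum into a slot no pointer uses, and the transition guesses how the datum
   compares with every slot. For intersection and composition the state also
   keeps the table of comparisons between slots; it decides whether the two
   simulated outputs coincide, and how the intermediate datum of a composition
   compares with the registers of the second transducer. *)

From HB Require Import structures.
From mathcomp Require Import all_boot.
From Stdlib Require Import Classical FunctionalExtensionality.
From Stdlib Require List.
Set Implicit Arguments.
Unset Strict Implicit.
Unset Printing Implicit Defensive.

Definition cmp_to_option (c : cmp) : option bool :=
  match c with CGt => Some true | CEq => None | CLt => Some false end.
Definition option_to_cmp (b : option bool) : cmp :=
  match b with Some true => CGt | None => CEq | Some false => CLt end.
Lemma cmp_to_optionK : cancel cmp_to_option option_to_cmp. Proof. by case. Qed.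
HB.instance Definition _ := Finite.copy cmp (can_type cmp_to_optionK).

Definition cmp_rev (c : cmp) : cmp :=
  match c with CGt => CLt | CEq => CEq | CLt => CGt end.

Section Comparisons.
Variable G : linear_group.
Implicit Types x y : G.

Lemma lg_lt_irrefl x : ~ lg_lt x x.
Proof. by case. Qed.

Lemma lg_lt_asym x y : lg_lt x y -> ~ lg_lt y x.
Proof. by move=> [le_xy ne_xy] [le_yx _]; apply/ne_xy/lg_le_antisym. Qed.

Lemma cmp_sem_inj a b x y : cmp_sem a x y -> cmp_sem b x y -> a = b.
Proof.
case: a; case: b => //= h1 h2; try subst;
  by [case: (lg_lt_asym h1 h2) | case: (lg_lt_irrefl h1) | case: (lg_lt_irrefl h2)].
Qed.

Lemma cmp_sem_total x y : exists c, cmp_sem c x y.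
Proof.
have [->|ne] := classic (x = y); first by exists CEq.
have [le|le] := lg_le_total x y; first by exists CLt.
by exists CGt; split=> // eq_yx; apply: ne.
Qed.

Lemma cmp_sem_rev c x y : cmp_sem c x y -> cmp_sem (cmp_rev c) y x.
Proof. by case: c. Qed.

Lemma cmp_sem_eq c x y : cmp_sem c x y -> (x = y <-> c = CEq).
Proof.
move=> xcy; split=> [eq_xy|c_eq]; last by rewrite c_eq in xcy.
by apply: cmp_sem_inj xcy _; rewrite /= eq_xy.
Qed.

Lemma cmp_vector_total n (V : 'I_n -> G) x :
  exists l : {ffun 'I_n -> cmp}, forall i, cmp_sem (l i) x (V i).
Proof.
have [l lP] := fin_all_exists (fun i => cmp_sem_total x (V i)).
by exists [ffun i => l i] => i; rewrite ffunE.
Qed.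

End Comparisons.

Section Slots.
Variables (G : linear_group) (N : nat).
Implicit Types (V : 'I_N -> G) (f : 'I_N) (l : {ffun 'I_N -> cmp}).

Definition set_slot V f (d : G) : 'I_N -> G := fun s => if s == f then d else V s.

Lemma set_slot_new V f d : set_slot V f d f = d.
Proof. by rewrite /set_slot eqxx. Qed.

Definition order_table (o : {ffun 'I_N * 'I_N -> cmp}) V :=
  forall a b, cmp_sem (o (a, b)) (V a) (V b).

Definition set_order (o : {ffun 'I_N * 'I_N -> cmp}) f l : {ffun 'I_N * 'I_N -> cmp} :=
  [ffun ab => if ab.1 == f then (if ab.2 == f then CEq else l ab.2)
              else if ab.2 == f then cmp_rev (l ab.1) else o ab].

Lemma order_table_set o V f l d :
  order_table o V -> (forall s, cmp_sem (l s) d (V s)) ->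
  order_table (set_order o f l) (set_slot V f d).
Proof.
move=> oV ld a b; rewrite ffunE /set_slot /=.
by case: (a == f); case: (b == f) => //; apply: cmp_sem_rev.
Qed.

Lemma order_table_total V : exists o, order_table o V.
Proof.
have [o oP] := fin_all_exists (fun ab : 'I_N * 'I_N => cmp_sem_total (V ab.1) (V ab.2)).
by exists [ffun ab => o ab] => a b; rewrite ffunE; apply: oP (a, b).
Qed.

End Slots.

Section Pointers.
Variables (G : linear_group) (Sigma Gamma Q : finType) (k N : nat).
Implicit Types (t : transition Sigma Gamma Q k) (p : {ffun 'I_k -> 'I_N}).

Definition retarget t p (g : 'I_N) : {ffun 'I_k -> 'I_N} :=
  [ffun i => if tr_upd t i is UNew then g else p i].

Definition tr_fires t q s (m : 'I_N -> cmp) p : bool :=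
  [&& tr_src t == q, tr_in t == s & [forall i, tr_test t i == m (p i)]].

Lemma enables_slotsE t p (V V' : 'I_N -> G) g e m :
  (forall i, tr_upd t i <> UAdd) -> V' g = e -> (forall i, V' (p i) = V (p i)) ->
  (forall i, cmp_sem (m (p i)) e (V (p i))) ->
  forall q s y d' q' R', enables t q (V \o p) s e y d' q' R' <->
  [/\ tr_fires t q s m p, tr_lab t = y, tr_dst t = q', R' = V' \o retarget t p g
    & d' = V' (retarget t p g (tr_out t))].
Proof.
move=> no_add V'g V'p me q s y d' q' R'.
have updE i : upd_sem (tr_upd t i) (V (p i)) e = V' (retarget t p g i).
  by rewrite ffunE; move: (no_add i); case: (tr_upd t i) => //= _; rewrite ?V'g ?V'p.
rewrite /enables /tr_fires; split.
- case=> <- <- <- <- [tests R'E ->].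
  have -> : R' = V' \o retarget t p g.
    by apply: functional_extensionality => i; rewrite R'E updE.
  rewrite !eqxx; split=> //; apply/forallP => i; apply/eqP.
  exact: cmp_sem_inj (tests i) (me i).
- case=> /and3P [/eqP <- /eqP <- /forallP tests] <- <- -> ->.
  by split=> //; split=> [i|i|//]; rewrite ?updE // (eqP (tests i)).
Qed.

End Pointers.

Definition slot_steps (G : linear_group) (Sigma Gamma : finType) (S : srt Sigma Gamma G) N
    (q : srt_Q S) (s : Sigma) (m : 'I_N -> cmp) (p : {ffun 'I_(srt_k S) -> 'I_N}) (g : 'I_N)
  : list (Gamma * 'I_N * ({ffun 'I_(srt_k S) -> 'I_N} * srt_Q S)) :=
  List.map (fun t => (tr_lab t, retarget t p g (tr_out t), (retarget t p g, tr_dst t)))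
    (List.filter (fun t => tr_fires t q s m p) (srt_Delta S)).

Lemma runs_slots_cons (G : linear_group) (Sigma Gamma : finType) (S : srt Sigma Gamma G) N
    (V V' : 'I_N -> G) (p : {ffun 'I_(srt_k S) -> 'I_N}) g e m :
  add_free S -> V' g = e -> (forall i, V' (p i) = V (p i)) ->
  (forall i, cmp_sem (m (p i)) e (V (p i))) ->
  forall q s y d' w, runs_from q (V \o p) (((s, e), (y, d')) :: w) <->
  exists u p' q', [/\ List.In (y, u, (p', q')) (slot_steps q s m p g), d' = V' u
                    & runs_from q' (V' \o p') w].
Proof.
move=> no_add V'g V'p me q s y d' w /=; split.
- case=> t [tD [q' [R' [/(enables_slotsE (no_add t tD) V'g V'p me) [fires <- <- -> ->] run]]]].
  exists (retarget t p g (tr_out t)), (retarget t p g), (tr_dst t); split=> //.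
  by apply/List.in_map_iff; exists t; split=> //; apply/List.filter_In.
- case=> u [p' [q' [/List.in_map_iff [t [[<- <- <- <-] /List.filter_In [tD fires]]] -> run]]].
  exists t; split=> //; exists (tr_dst t), (V' \o retarget t p g); split=> //.
  exact/(enables_slotsE (no_add t tD) V'g V'p me).
Qed.

Definition fresh_slot k1 k2 N (X : Type)
    (c : {ffun 'I_k1 -> 'I_N.+1} * {ffun 'I_k2 -> 'I_N.+1} * X) : 'I_N.+1 :=
  odflt ord0 [pick s | s \notin codom c.1.1 ++ codom c.1.2].
Arguments fresh_slot {k1 k2 N X} c.

Lemma set_fresh_slot (G : linear_group) k1 k2 N (X : Type) (p1 : {ffun 'I_k1 -> 'I_N.+1})
    (p2 : {ffun 'I_k2 -> 'I_N.+1}) (x : X) (V : 'I_N.+1 -> G) d :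
  k1 + k2 <= N -> let V' := set_slot V (fresh_slot (p1, p2, x)) d in
  (forall i, V' (p1 i) = V (p1 i)) /\ (forall j, V' (p2 j) = V (p2 j)).
Proof.
move=> le_kN V'; suff unused : fresh_slot (p1, p2, x) \notin codom p1 ++ codom p2.
  by split=> i; rewrite /V' /set_slot; case: eqP => // used;
    rewrite -used mem_cat codom_f ?orbT in unused.
rewrite /fresh_slot /=; case: pickP => //= all_used.
have : #|'I_N.+1| <= #|codom p1 ++ codom p2|.
  by apply/subset_leq_card/subsetP => s _; move/negbFE: (all_used s).
rewrite card_ord => /leq_trans/(_ (card_size _)).
by rewrite size_cat !size_codom !card_ord ltnNge le_kN.
Qed.

Lemma init_slots (G : linear_group) k1 k2 (R1 : 'I_k1 -> G) (R2 : 'I_k2 -> G) :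
  exists (p1 : {ffun 'I_k1 -> 'I_(k1 + k2).+1}) (p2 : {ffun 'I_k2 -> 'I_(k1 + k2).+1})
         (V : 'I_(k1 + k2).+1 -> G), V \o p1 = R1 /\ V \o p2 = R2.
Proof.
pose V s := if unlift ord_max s is Some s' then
              (match split s' with inl i => R1 i | inr j => R2 j end) else lg_zero G.
exists [ffun i => lift ord_max (lshift k2 i)], [ffun j => lift ord_max (rshift k1 j)], V.
by split; apply: functional_extensionality => i;
  rewrite /V /= ffunE liftK ?(unsplitK (inl _)) ?(unsplitK (inr _)).
Qed.

Section SlotSrt.
Variables (G : linear_group) (Sigma Gamma C : finType) (N : nat).
Variable fresh : C -> 'I_N.
Variable step : C -> Sigma -> {ffun 'I_N -> cmp} -> list (Gamma * 'I_N * C).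

Definition slot_tr c s (l : {ffun 'I_N -> cmp}) (x : Gamma * 'I_N * C)
  : transition Sigma Gamma C N :=
  Transition c s l (fun i => if i == fresh c then UNew else UOld) x.1.2 x.1.1 x.2.

Definition slot_srt (c0 : C) (V0 : 'I_N -> G) : srt Sigma Gamma G :=
  @SRT Sigma Gamma G C c0 N V0
    (List.flat_map (fun c => List.flat_map (fun s => List.flat_map (fun l =>
       List.map (slot_tr c s l) (step c s l)) (enum {ffun 'I_N -> cmp})) (enum Sigma)) (enum C)).

Fixpoint slot_runs c (V : 'I_N -> G) (w : seq ((Sigma * G) * (Gamma * G))) : Prop :=
  if w is ((s, d), (y, d')) :: w' then
    exists2 l : {ffun 'I_N -> cmp}, (forall i, cmp_sem (l i) d (V i)) &
      exists u c', [/\ List.In (y, u, c') (step c s l), d' = set_slot V (fresh c) d u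
                     & slot_runs c' (set_slot V (fresh c) d) w']
  else True.

Lemma In_enum (T : finType) (x : T) : List.In x (enum T).
Proof.
have : x \in enum T by rewrite mem_enum.
by elim: (enum T) => //= y s IHs; rewrite in_cons => /orP [/eqP ->|/IHs]; [left|right].
Qed.

Lemma In_slot_srt c0 V0 t :
  List.In t (srt_Delta (slot_srt c0 V0)) <->
  exists c s l x, List.In x (step c s l) /\ t = slot_tr c s l x.
Proof.
split=> [/List.in_flat_map [c [_ /List.in_flat_map [s [_ /List.in_flat_map [l [_]]]]]]|].
  by move=> /List.in_map_iff [x [<- step_x]]; exists c, s, l, x.
case=> c [s [l [x [step_x ->]]]].
do 3![apply/List.in_flat_map; eexists; split; first exact: In_enum].
by apply/List.in_map_iff; exists x.
Qed.

Lemma slot_srt_add_free c0 V0 : add_free (slot_srt c0 V0).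
Proof. by move=> t /In_slot_srt [c [s [l [x [_ ->]]]]] i /=; case: (i == fresh c). Qed.

Lemma runs_slot_srtE c0 V0 w c V :
  @runs_from _ _ _ (slot_srt c0 V0) c V w <-> slot_runs c V w.
Proof.
elim: w c V => [|[[s d] [y d']] w IHw] c V //; split.
- case=> t [/In_slot_srt [c1 [s1 [l [[[y1 u] c1'] [step_x ->]]]]]].
  case=> c' [R' [[/= <- <- <- <- [tests R'E ->]] run]].
  have R'_set : R' = set_slot V (fresh c1) d.
    by apply: functional_extensionality => i; rewrite R'E /set_slot; case: (i == fresh c1).
  by exists l => //; exists u, c1'; rewrite -R'_set; split=> //; apply/IHw.
- case=> l tests [u [c' [step_x -> run]]].
  exists (slot_tr c s l (y, u, c')); split.
    by apply/In_slot_srt; exists c, s, l, (y, u, c').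
  exists c', (set_slot V (fresh c) d); split; last exact/IHw.
  by split=> //; split=> // i /=; rewrite /set_slot; case: (i == fresh c).
Qed.

Lemma slot_runs_cons V d (l : {ffun 'I_N -> cmp}) :
  (forall i, cmp_sem (l i) d (V i)) ->
  forall c s y d' w, slot_runs c V (((s, d), (y, d')) :: w) <->
  exists u c', [/\ List.In (y, u, c') (step c s l), d' = set_slot V (fresh c) d u
                 & slot_runs c' (set_slot V (fresh c) d) w].
Proof.
move=> ld c s y d' w /=; split=> [[l' l'd run]|run]; last by exists l.
suff -> : l = l' by [].
by apply/ffunP => i; apply: cmp_sem_inj (ld i) (l'd i).
Qed.

End SlotSrt.

Section Product.
Variables (G : linear_group) (Sigma Gamma : finType) (S1 S2 : srt Sigma Gamma G).
Hypotheses (S1_add_free : add_free S1) (S2_add_free : add_free S2).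
Local Notation slot := 'I_(srt_k S1 + srt_k S2).+1.
Local Notation ptrs1 := {ffun 'I_(srt_k S1) -> slot}.
Local Notation ptrs2 := {ffun 'I_(srt_k S2) -> slot}.
Local Notation table := {ffun slot * slot -> cmp}.
Local Notation union_state := (ptrs1 * ptrs2 * (option (srt_Q S1) * option (srt_Q S2)))%type.
Local Notation inter_state := (ptrs1 * ptrs2 * (srt_Q S1 * srt_Q S2 * table))%type.

(* [None] is a dead state without transitions: it only accepts the empty word. *)
Definition opt_runs (S : srt Sigma Gamma G) (oq : option (srt_Q S)) (R : 'I_(srt_k S) -> G)
    (w : seq ((Sigma * G) * (Gamma * G))) : Prop :=
  if oq is Some q then runs_from q R w else w = [::].

Definition opt_slot_steps (S : srt Sigma Gamma G) (oq : option (srt_Q S)) (s : Sigma)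
    (m : slot -> cmp) (p : {ffun 'I_(srt_k S) -> slot}) (g : slot)
  : list (Gamma * slot * ({ffun 'I_(srt_k S) -> slot} * srt_Q S)) :=
  if oq is Some q then slot_steps q s m p g else [::].

Lemma opt_runs_cons (S : srt Sigma Gamma G) (oq : option (srt_Q S)) (V V' : slot -> G)
    (p : {ffun 'I_(srt_k S) -> slot}) g e m :
  add_free S -> V' g = e -> (forall i, V' (p i) = V (p i)) ->
  (forall i, cmp_sem (m (p i)) e (V (p i))) ->
  forall s y d' w, opt_runs oq (V \o p) (((s, e), (y, d')) :: w) <->
  exists u p' q', [/\ List.In (y, u, (p', q')) (opt_slot_steps oq s m p g), d' = V' u
                    & runs_from q' (V' \o p') w].
Proof.
case: oq => [q|] no_add V'g V'p me s y d' w; first exact: runs_slots_cons.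
by split=> [//|[u [p' [q' []]]]].
Qed.

Definition union_step (c : union_state) (s : Sigma) (l : {ffun slot -> cmp})
  : list (Gamma * slot * union_state) :=
  let f := fresh_slot c in
  let: (p1, p2, (oq1, oq2)) := c in
  (List.map (fun '(y, u, (p1', q1')) => (y, u, (p1', p2, (Some q1', None))))
     (opt_slot_steps oq1 s l p1 f) ++
   List.map (fun '(y, u, (p2', q2')) => (y, u, (p1, p2', (None, Some q2'))))
     (opt_slot_steps oq2 s l p2 f))%list.

Lemma union_runs w : forall p1 p2 oq1 oq2 (V : slot -> G),
  slot_runs fresh_slot union_step (p1, p2, (oq1, oq2)) V w <->
  opt_runs oq1 (V \o p1) w \/ opt_runs oq2 (V \o p2) w.
Proof.
elim: w => [|[[s d] [y d']] w IHw] p1 p2 oq1 oq2 V.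
  by split=> // _; left; case: oq1.
have [l ld] := cmp_vector_total V d.
have [fr1 fr2] := set_fresh_slot p1 p2 (oq1, oq2) V d (leqnn _).
rewrite (slot_runs_cons _ _ ld).
rewrite (opt_runs_cons _ S1_add_free (set_slot_new _ _ _) fr1 (fun i => ld (p1 i))).
rewrite (opt_runs_cons _ S2_add_free (set_slot_new _ _ _) fr2 (fun i => ld (p2 i))).
split.
- case=> u [c' [/List.in_app_iff [|] /List.in_map_iff [[[y' u'] [p' q']] [[<- <- <-] steps]]]];
    move=> -> /IHw /= run; [left|right]; exists u', p', q'; split=> //; by case: run => // ->.
- case=> [[u [p' [q' [steps -> run]]]]|[u [p' [q' [steps -> run]]]]]; eexists u, _; split=> //.
  + by apply/List.in_app_iff; left; apply/List.in_map_iff; exists (y, u, (p', q')).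
  + by apply/IHw; left.
  + by apply/List.in_app_iff; right; apply/List.in_map_iff; exists (y, u, (p', q')).
  + by apply/IHw; right.
Qed.

Definition inter_step (c : inter_state) (s : Sigma) (l : {ffun slot -> cmp})
  : list (Gamma * slot * inter_state) :=
  let f := fresh_slot c in
  let: (p1, p2, (q1, q2, o)) := c in
  let o' := set_order o f l in
  List.map (fun '((y, u, (p1', q1')), (_, _, (p2', q2'))) => (y, u, (p1', p2', (q1', q2', o'))))
    (List.filter (fun '((y1, u1, _), (y2, u2, _)) => (y1 == y2) && (o' (u1, u2) == CEq))
       (List.list_prod (slot_steps q1 s l p1 f) (slot_steps q2 s l p2 f))).

Lemma inter_runs w : forall p1 p2 q1 q2 o (V : slot -> G), order_table o V ->
  slot_runs fresh_slot inter_step (p1, p2, (q1, q2, o)) V w <->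
  runs_from q1 (V \o p1) w /\ runs_from q2 (V \o p2) w.
Proof.
elim: w => [|[[s d] [y d']] w IHw] p1 p2 q1 q2 o V oV //.
have [l ld] := cmp_vector_total V d.
have [fr1 fr2] := set_fresh_slot p1 p2 (q1, q2, o) V d (leqnn _).
have oV' := order_table_set (fresh_slot (p1, p2, (q1, q2, o))) oV ld.
rewrite (slot_runs_cons _ _ ld).
rewrite (runs_slots_cons S1_add_free (set_slot_new _ _ _) fr1 (fun i => ld (p1 i))).
rewrite (runs_slots_cons S2_add_free (set_slot_new _ _ _) fr2 (fun i => ld (p2 i))).
split.
- case=> u [c' [/List.in_map_iff [[[[y1 u1] [p1' q1']] [[y2 u2] [p2' q2']]] [[<- <- <-]]]]].
  case/List.filter_In => /List.in_prod_iff [steps1 steps2] /andP [/eqP y12 /eqP same].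
  subst y2; move=> -> /(IHw _ _ _ _ _ _ oV') [run1 run2].
  split; [exists u1, p1', q1' | exists u2, p2', q2'] => //; split=> //.
  exact/(cmp_sem_eq (oV' u1 u2)).
- case=> [[u1 [p1' [q1' [steps1 -> run1]]]] [u2 [p2' [q2' [steps2 same run2]]]]].
  eexists u1, (p1', p2', (q1', q2', _)); split=> //; last exact/(IHw _ _ _ _ _ _ oV').
  apply/List.in_map_iff; exists ((y, u1, (p1', q1')), (y, u2, (p2', q2'))); split=> //.
  apply/List.filter_In; split; first exact/List.in_prod_iff.
  by rewrite eqxx; apply/eqP/(cmp_sem_eq (oV' u1 u2)).
Qed.

Lemma add_free_srt_union : exists S : srt Sigma Gamma G,
  add_free S /\ forall w, semantics S w <-> semantics S1 w \/ semantics S2 w.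
Proof.
have [p1 [p2 [V0 [R1E R2E]]]] := init_slots (@srt_R0 _ _ _ S1) (@srt_R0 _ _ _ S2).
exists (slot_srt fresh_slot union_step (p1, p2, (Some (srt_q0 S1), Some (srt_q0 S2))) V0).
split=> [|w]; first exact: slot_srt_add_free.
by rewrite /semantics runs_slot_srtE union_runs /= R1E R2E.
Qed.

Lemma add_free_srt_inter : exists S : srt Sigma Gamma G,
  add_free S /\ forall w, semantics S w <-> semantics S1 w /\ semantics S2 w.
Proof.
have [p1 [p2 [V0 [R1E R2E]]]] := init_slots (@srt_R0 _ _ _ S1) (@srt_R0 _ _ _ S2).
have [o0 o0V0] := order_table_total V0.
exists (slot_srt fresh_slot inter_step (p1, p2, (srt_q0 S1, srt_q0 S2, o0)) V0).
split=> [|w]; first exact: slot_srt_add_free.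
by rewrite /semantics runs_slot_srtE inter_runs // R1E R2E.
Qed.

End Product.

Lemma compose_cons (A B C : Type) (G : linear_group) (T1 : transformation A B G)
    (T2 : transformation B C G) x z w :
  compose T1 T2 ((x, z) :: w) <->
  exists y, compose (fun v => T1 ((x, y) :: v)) (fun v => T2 ((y, z) :: v)) w.
Proof.
split=> [[[|x' s1] [[|z' s2] [[|y s3] [//= [e13] [e32] [<- <- ->] T1w T2w]]]]|].
  by exists y, s1, s2, s3.
case=> y [s1 [s2 [s3 [e13 e32 -> T1w T2w]]]].
by exists (x :: s1), (z :: s2), (y :: s3); rewrite /= e13 e32.
Qed.

Section Composition.
Variables (G : linear_group) (Sigma Gamma Theta : finType).
Variables (S1 : srt Sigma Gamma G) (S2 : srt Gamma Theta G).
Hypotheses (S1_add_free : add_free S1) (S2_add_free : add_free S2).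
Local Notation slot := 'I_(srt_k S1 + srt_k S2).+1.
Local Notation ptrs1 := {ffun 'I_(srt_k S1) -> slot}.
Local Notation ptrs2 := {ffun 'I_(srt_k S2) -> slot}.
Local Notation table := {ffun slot * slot -> cmp}.
Local Notation comp_state := (ptrs1 * ptrs2 * (srt_Q S1 * srt_Q S2 * table))%type.

Definition comp_step (c : comp_state) (s : Sigma) (l : {ffun slot -> cmp})
  : list (Theta * slot * comp_state) :=
  let f := fresh_slot c in
  let: (p1, p2, (q1, q2, o)) := c in
  let o' := set_order o f l in
  List.flat_map (fun '(y, u, (p1', q1')) =>
      List.map (fun '(z, v, (p2', q2')) => (z, v, (p1', p2', (q1', q2', o'))))
        (slot_steps q2 y (fun x => o' (u, x)) p2 u))
    (slot_steps q1 s l p1 f).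

Lemma comp_runs w : forall p1 p2 q1 q2 o (V : slot -> G), order_table o V ->
  slot_runs fresh_slot comp_step (p1, p2, (q1, q2, o)) V w <->
  compose (runs_from q1 (V \o p1)) (runs_from q2 (V \o p2)) w.
Proof.
elim: w => [|[[s d] [z d']] w IHw] p1 p2 q1 q2 o V oV.
  by split=> // _; exists [::], [::], [::].
have [l ld] := cmp_vector_total V d.
have [fr1 fr2] := set_fresh_slot p1 p2 (q1, q2, o) V d (leqnn _).
set f := fresh_slot _ in fr1 fr2 *; set Vf := set_slot V f d in fr1 fr2 *.
have oVf : order_table (set_order o f l) Vf := order_table_set f oV ld.
have runs1_cons := runs_slots_cons S1_add_free (set_slot_new V f d) fr1 (fun i => ld (p1 i)).
have cmp_mid u j : cmp_sem (set_order o f l (u, p2 j)) (Vf u) (V (p2 j)).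
  by rewrite -fr2; apply: oVf.
have runs2_cons u := runs_slots_cons (m := fun x => set_order o f l (u, x)) S2_add_free
  (erefl (Vf u)) fr2 (cmp_mid u).
rewrite (slot_runs_cons _ _ ld) compose_cons; split.
- case=> v [c' [/List.in_flat_map [[[y u] [p1' q1']] [steps1]]]].
  case/List.in_map_iff=> [[[z' v'] [p2' q2']] [[<- <- <-] steps2]].
  move=> -> /(IHw _ _ _ _ _ _ oVf) [s1 [s2 [s3 [e13 e32 -> run1 run2]]]].
  exists (y, Vf u), s1, s2, s3; split=> //.
    by apply/runs1_cons; exists u, p1', q1'.
  by apply/runs2_cons; exists v', p2', q2'.
- case=> [[y d3] [s1 [s2 [s3 [e13 e32 wE /runs1_cons run1 run2]]]]].
  case: run1 => u [p1' [q1' [steps1 d3E run1]]]; subst d3.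
  case/runs2_cons: run2 => v [p2' [q2' [steps2 -> run2]]].
  exists v, (p1', p2', (q1', q2', set_order o f l)); split=> //.
    apply/List.in_flat_map; exists (y, u, (p1', q1')); split=> //.
    by apply/List.in_map_iff; exists (z, v, (p2', q2')).
  by apply/(IHw _ _ _ _ _ _ oVf); exists s1, s2, s3.
Qed.

Lemma add_free_srt_compose : exists S : srt Sigma Theta G,
  add_free S /\ forall w, semantics S w <-> compose (semantics S1) (semantics S2) w.
Proof.
have [p1 [p2 [V0 [R1E R2E]]]] := init_slots (@srt_R0 _ _ _ S1) (@srt_R0 _ _ _ S2).
have [o0 o0V0] := order_table_total V0.
exists (slot_srt fresh_slot comp_step (p1, p2, (srt_q0 S1, srt_q0 S2, o0)) V0).
split=> [|w]; first exact: slot_srt_add_free.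
by rewrite /semantics runs_slot_srtE comp_runs // R1E R2E.
Qed.

End Composition.

Theorem theorem3p19 (G : linear_group) (Sigma Gamma Theta : finType) :
  (forall S1 S2 : srt Sigma Gamma G, add_free S1 -> add_free S2 ->
     (exists S : srt Sigma Gamma G, add_free S /\
        forall w, semantics S w <-> (semantics S1 w \/ semantics S2 w)) /\
     (exists S : srt Sigma Gamma G, add_free S /\
        forall w, semantics S w <-> (semantics S1 w /\ semantics S2 w))) /\
  (forall (S1 : srt Sigma Gamma G) (S2 : srt Gamma Theta G),
     add_free S1 -> add_free S2 ->
     exists S : srt Sigma Theta G, add_free S /\
        forall w, semantics S w <-> compose (semantics S1) (semantics S2) w).
Proof.
split; last exact: add_free_srt_compose.
by move=> S1 S2 A1 A2; split; [exact: add_free_srt_union | exact: add_free_srt_inter].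
Qed.
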